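(* For any partition $\lambda$, the function $s_\lambda:\mathbb{N}\to\mathbb{N}$ is a Castelnuovo function of the same weight as $\lambda$. The correspondence $\lambda\mapsto s_\lambda$ is a surjective map from the set of all partitions to the set of all Castelnuovo functions. Furthermore $(b(\lambda),w(\lambda))=(b(s_\lambda),w(s_\lambda))$.
   Context: $\mathbb{N}=\{0,1,2,\dots\}$. A partition is a finite nonincreasing sequence $\lambda=(\lambda_1,\dots,\lambda_r)$ of positive integers (the empty sequence is the partition of $0$); set $\lambda_i=0$ for $i<1$ and $i>r$; its weight is $\sum_i\lambda_i$. Its Ferrers graph has row $i$ (rows indexed from $0$) containing $\lambda_{i+1}$ left-justified unit squares, columns indexed from $0$; the square in row $r$, column $c$ is black if $r+c$ is even and white otherwise; $b(\lambda)$, $w(\lambda)$ are the numbers of black and white squares. Define $s_\lambda(m)$, for $m\in\mathbb{N}$, as the number of squares $(r,c)$ of the Ferrers graph with $r+c=m$, i.e. $s_\lambda(m)=\#\{i\ge 1: i\le m+1,\ \lambda_i\ge m+2-i\}$. A Castelnuovo function is a finitely supported function $s:\mathbb{N}\to\mathbb{N}$ such that for some integer $\sigma\ge 0$, $s(0)=1,s(1)=2,\dots,s(\sigma-1)=\sigma$ and $s(\sigma-1)\ge s(\sigma)\ge s(\sigma+1)\ge\dots\ge 0$ (with the convention $s(-1)=0$ when $\sigma=0$). Its weight is $\sum_n s(n)$, and $b(s)=\sum_i s(2i)$, $w(s)=\sum_i s(2i+1)$. *)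

From mathcomp Require Import all_boot.
Set Implicit Arguments. Unset Strict Implicit. Unset Printing Implicit Defensive.

Definition is_partition (l : seq nat) : Prop :=
  sorted geq l /\ all (fun x => 0 < x) l.

(* lambda_i, 1-indexed; 0 outside 1..r *)
Definition part (l : seq nat) (i : nat) : nat :=
  if i is i'.+1 then nth 0 l i' else 0.

Definition pweight (l : seq nat) : nat := sumn l.

(* Squares (r,c) of the Ferrers graph: row r (from 0) has lambda_{r+1} squares. *)
Definition black (l : seq nat) : nat :=
  \sum_(r < size l) \sum_(c < nth 0 l r) ~~ odd (r + c).
Definition white (l : seq nat) : nat :=
  \sum_(r < size l) \sum_(c < nth 0 l r) odd (r + c).

Definition slam (l : seq nat) (m : nat) : nat :=
  \sum_(1 <= i < m.+2) (m.+2 - i <= part l i).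

Definition fin_supp (s : nat -> nat) (N : nat) : Prop :=
  forall n, N <= n -> s n = 0.

Definition is_castelnuovo (s : nat -> nat) : Prop :=
  (exists N, fin_supp s N) /\
  exists sigma : nat,
    (forall n, n < sigma -> s n = n.+1) /\
    (if sigma is sigma'.+1 then s sigma <= s sigma' else s 0 <= 0) /\
    (forall n, sigma <= n -> s n.+1 <= s n).

(* Sums over N of a finitely supported function, truncated at a support bound N *)
Definition sweight (s : nat -> nat) (N : nat) : nat := \sum_(n < N) s n.
Definition sblack (s : nat -> nat) (N : nat) : nat := \sum_(n < N | ~~ odd n) s n.
Definition swhite (s : nat -> nat) (N : nat) : nat := \sum_(n < N | odd n) s n.

From mathcomp Require Import all_boot zify.
Set Implicit Arguments. Unset Strict Implicit. Unset Printing Implicit Defensive.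

(* Index the rows of the Ferrers graph from 0 and let mu r be the length of row r.
   Then s_lambda m counts the rows r <= m with m - r < mu r, i.e. the squares on
   the antidiagonal r + c = m.  A finitely supported s is a Castelnuovo function
   iff s m <= m + 1 for all m and s (m + 1) <= s m whenever s m <= m.  Antidiagonal
   counts satisfy this: if the square (r, m - r) is missing, then on the
   antidiagonal m + 1 row r has no square and every row below r has at most as
   many squares as the row above it has on the antidiagonal m.  Conversely, for a
   Castelnuovo s the cells (r, c) with r < s (r + c) are closed under moving up
   and left, so they form a Ferrers graph whose antidiagonal m consists of its
   first s m cells.  Weights and colour counts agree because both sides count the
   same cells, once by rows and once by antidiagonals. *)

Lemma leq_bool (a b : bool) : (a -> b) -> a <= b.
Proof. by case: a; case: b => // /(_ isT). Qed.

Lemma nonincr_homo (mu : nat -> nat) :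
  (forall i, mu i.+1 <= mu i) -> {homo mu : i j /~ i <= j}.
Proof.
move=> mu_S i j; apply: (homo_leq (r := fun a b => b <= a)) => // y x z le_yx le_zy.
exact: leq_trans le_zy le_yx.
Qed.

Lemma sum_bool_ltn (b : pred nat) n :
  \sum_(0 <= i < n) b i < n -> exists2 i, i < n & ~~ b i.
Proof.
case: (boolP [forall i : 'I_n, b i]) => [/forallP all_b | /forallPn [i nbi]]; last by exists i.
rewrite big_mkord (eq_bigr (fun=> 1)) => [|i _]; last by rewrite all_b.
by rewrite sum1_card card_ord ltnn.
Qed.

Lemma sum_ltn_ord k n : \sum_(i < n) (i < k) = minn k n.
Proof.
by elim: n => [|n IH]; rewrite ?big_ord0 ?minn0 // big_ord_recr /= IH; case: ltnP; lia.
Qed.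

Lemma ltn_sum_downclosed (P : pred nat) N :
    (forall c, P c.+1 -> P c) -> (forall c, N <= c -> ~~ P c) ->
  forall c, (c < \sum_(i < N) P i) = P c.
Proof.
elim: N P => [|N IH] P P_down P_N c.
  by rewrite big_ord0 ltn0; apply/esym/negbTE/P_N.
rewrite big_ord_recl; case P0: (P 0); last first.
  have notP n : P n = false by elim: n => // n IHn; apply/negP => /P_down; rewrite IHn.
  by rewrite notP big1 // => i _; rewrite notP.
have := IH (fun c => P c.+1) (fun c => @P_down c.+1) (fun c le => P_N c.+1 le).
by case: c => [|c] IHc; rewrite ?P0 // add1n ltnS IHc.
Qed.

Lemma nth_nonincr l : sorted geq l -> forall i, nth 0 l i.+1 <= nth 0 l i.
Proof.
move=> l_sorted i; case: (ltnP i.+1 (size l)) => [lt | ge]; last by rewrite nth_default.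
by apply: (sorted_leq_nth (rev_trans leq_trans) leqnn) => //; rewrite inE ltnW.
Qed.

Lemma castelnuovoP (s : nat -> nat) :
  is_castelnuovo s <->
  [/\ exists N, fin_supp s N, forall m, s m <= m.+1
    & forall m, s m <= m -> s m.+1 <= s m].
Proof.
split=> [[supp [sg [below [at_sg above]]]] | [[N suppN] le_s step]].
  have s_sg : s sg <= sg.
    by move: below at_sg; case: (sg) => [|k] below s_at //; rewrite (below k) in s_at.
  have tail n : sg <= n -> s n <= sg.
    elim: n => [|n IH]; first by rewrite leqn0 => /eqP <-.
    case: (ltngtP sg n.+1) => // [lt_sg _ | <- //].
    exact: leq_trans (above n lt_sg) (IH lt_sg).
  split=> // m; case: (ltnP m sg) => [/below -> | le_sg]; rewrite ?ltnn //.
    exact: leq_trans (tail m le_sg) (leqW le_sg).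
  by move=> _; apply: above.
split; first by exists N.
have ex : exists m, s m <= m by exists N; rewrite suppN.
case: (ex_minnP ex) => sg s_sg min_sg.
have below n : n < sg -> s n = n.+1.
  move=> lt; apply/eqP; rewrite eqn_leq le_s ltnNge.
  by apply: contraL lt => /min_sg; rewrite -leqNgt.
have above n : sg <= n -> s n <= n.
  elim: n => [|n IH]; first by rewrite leqn0 => /eqP <-.
  case: (ltngtP sg n.+1) => // [lt _ | <- //].
  exact: leq_trans (step n (IH lt)) (leqW (IH lt)).
exists sg; split=> [//|]; split=> [|n /above]; last exact: step.
by move: s_sg below; case: (sg) => [|k] s_sg below //; rewrite (below k).
Qed.

Lemma eq_castelnuovo (s t : nat -> nat) :
  s =1 t -> is_castelnuovo s -> is_castelnuovo t.
Proof.
move=> e /castelnuovoP[[N suppN] le_s step]; apply/castelnuovoP.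
split=> [|m|m]; first by exists N => n /suppN; rewrite -e.
  by rewrite -e.
by rewrite -!e; apply: step.
Qed.

Lemma sum_row (P : pred nat) r k N : r + k <= N ->
  \sum_(0 <= n < N | P n) (r <= n < r + k) = \sum_(0 <= c < k) P (r + c).
Proof.
move=> le_N; have le_rN : r <= N := leq_trans (leq_addr k r) le_N.
rewrite big_mkcond (big_cat_nat (n := r)) //= big_nat_cond big1 ?add0n; last first.
  by move=> n /andP[/andP[_ lt_nr] _]; case: (P n) => //; rewrite leqNgt lt_nr.
rewrite (big_cat_nat (n := r + k)) ?leq_addr //= [X in _ + X]big_nat_cond.
rewrite [X in _ + X]big1 ?addn0 => [|n /andP[/andP[le_n _] _]]; last first.
  by case: (P n) => //; rewrite ltnNge le_n andbF.
rewrite -{1}[r]add0n big_addn addKn.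
apply: eq_big_nat => c /andP[_ lt_ck]; rewrite addnC leq_addr ltn_add2l lt_ck.
by case: (P _).
Qed.

Definition diag (mu : nat -> nat) (m : nat) : nat :=
  \sum_(0 <= i < m.+1) (m - i < mu i).

Section Diagonals.

Variable mu : nat -> nat.
Hypothesis mu_nonincr : forall i, mu i.+1 <= mu i.

Lemma diag_le m : diag mu m <= m.+1.
Proof.
rewrite -[m.+1]subn0 -[X in _ <= X]muln1 -sum_nat_const_nat.
by apply: leq_sum => i _; apply: leq_b1.
Qed.

Lemma diag_nonincr m : diag mu m <= m -> diag mu m.+1 <= diag mu m.
Proof.
move=> /(@sum_bool_ltn (fun i => m - i < mu i) m.+1) [r le_rm]; rewrite -leqNgt => mu_r.
rewrite /diag (big_cat_nat (n := r)) //; last exact: leqW (ltnW _).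
rewrite [X in _ <= X](big_cat_nat (n := r)) //=; last exact: ltnW.
apply: leq_add; first by apply: leq_sum => i _; apply: leq_bool; lia.
rewrite big_nat_recl; last exact: ltnW.
have -> : (m.+1 - r < mu r) = false by lia.
by apply: leq_sum => i _; apply: leq_bool; rewrite subSS => /leq_trans; apply.
Qed.

Lemma diag_fin_supp K :
  (forall r, K <= r -> mu r = 0) -> fin_supp (diag mu) (K + mu 0).
Proof.
move=> mu_K n le_n; rewrite /diag big_nat_cond big1 // => i /andP[/andP[_ le_in] _].
case: (leqP K i) => [/mu_K -> // | lt_iK].
have := nonincr_homo mu_nonincr (leq0n i); lia.
Qed.

Lemma diag_castelnuovo K : (forall r, K <= r -> mu r = 0) -> is_castelnuovo (diag mu).
Proof.
move=> mu_K; apply/castelnuovoP; split; [by exists (K + mu 0); exact: diag_fin_supp |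
  exact: diag_le | exact: diag_nonincr].
Qed.

Lemma diag_cells n N : n < N -> diag mu n = \sum_(0 <= r < N) (r <= n < r + mu r).
Proof.
move=> lt_nN; rewrite /diag (@big_cat_nat _ _ _ n.+1 0 N _ _ (leq0n _) lt_nN) /=.
rewrite [X in _ + X]big_nat_cond [X in _ + X]big1 ?addn0 => [|r /andP[/andP[lt_nr _] _]].
  by apply: eq_big_nat => r /andP[_]; rewrite ltnS => le_rn; rewrite le_rn ltn_subLR.
by rewrite leqNgt lt_nr.
Qed.

Lemma sum_diag (P : pred nat) K N :
    (forall r, K <= r -> mu r = 0) -> K + mu 0 <= N ->
  \sum_(n < N | P n) diag mu n = \sum_(r < K) \sum_(c < mu r) P (r + c).
Proof.
move=> mu_K le_N; have le_KN : K <= N := leq_trans (leq_addr _ _) le_N.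
have le_rowN r : r < N -> r + mu r <= N.
  case: (leqP K r) => [/mu_K -> lt_rN | lt_rK _]; first by rewrite addn0 ltnW.
  have := nonincr_homo mu_nonincr (leq0n r); lia.
rewrite -big_mkord big_nat_cond (eq_bigr (fun n => \sum_(0 <= r < N) (r <= n < r + mu r)))
  => [|n /andP[/andP[_ lt_nN] _]]; last exact: diag_cells.
rewrite -big_nat_cond exchange_big_nat /=.
rewrite (eq_big_nat _ _ (F2 := fun r => \sum_(0 <= c < mu r) P (r + c)))
  => [|r /andP[_ /le_rowN]]; last exact: sum_row.
rewrite (big_cat_nat (n := K)) //= [X in _ + X]big_nat_cond [X in _ + X]big1 ?addn0.
  by rewrite big_mkord; apply: eq_bigr => r _; rewrite big_mkord.
by move=> r /andP[/andP[/mu_K -> _] _]; rewrite big_geq.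
Qed.

End Diagonals.

Lemma sum_fin_supp (s : nat -> nat) (P : pred nat) N M :
  fin_supp s N -> fin_supp s M -> \sum_(n < N | P n) s n = \sum_(n < M | P n) s n.
Proof.
wlog le_NM : N M / N <= M => [wlog_le sN sM | sN _].
  by case: (leqP N M) => [|/ltnW] le; [apply: wlog_le | symmetry; apply: wlog_le].
rewrite (big_ord_widen_cond _ P s le_NM) [RHS](bigID (fun n : 'I_M => n < N)) /=.
by rewrite [X in _ = _ + X]big1 ?addn0 // => n /andP[_]; rewrite -leqNgt => /sN.
Qed.

Lemma slam_diag l mu : nth 0 l =1 mu -> slam l =1 diag mu.
Proof.
move=> l_mu m; rewrite /slam /diag big_add1 /=; apply: eq_big_nat => i /andP[_ lt_im].
by rewrite /= l_mu subSS subSn.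
Qed.

Lemma slam_castelnuovo l : sorted geq l -> is_castelnuovo (slam l).
Proof.
move=> l_sorted; apply: (eq_castelnuovo (fun m => esym (slam_diag (frefl _) m))).
exact: (diag_castelnuovo (nth_nonincr l_sorted) (fun r => @nth_default _ 0 l r)).
Qed.

Lemma sum_slam (P : pred nat) l N : sorted geq l -> fin_supp (slam l) N ->
  \sum_(n < N | P n) slam l n = \sum_(r < size l) \sum_(c < nth 0 l r) P (r + c).
Proof.
move=> l_sorted suppN.
have mu_K r : size l <= r -> nth 0 l r = 0 := @nth_default _ 0 l r.
have suppM := diag_fin_supp (nth_nonincr l_sorted) mu_K.
rewrite (sum_fin_supp P suppN (M := size l + nth 0 l 0)) => [|n /suppM].
  rewrite -(sum_diag (nth_nonincr l_sorted) P mu_K (leqnn _)).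
  by apply: eq_bigr => n _; rewrite (slam_diag (frefl _)).
by rewrite (slam_diag (frefl _)).
Qed.

Section RowsOfCastelnuovo.

Variables (s : nat -> nat) (N : nat).
Hypotheses (s_supp : fin_supp s N) (s_le : forall m, s m <= m.+1)
  (s_step : forall m, s m <= m -> s m.+1 <= s m).

Lemma lt_s_downclosed r n : r <= n -> r < s n.+1 -> r < s n.
Proof.
move=> le_rn lt_r; case: (leqP (s n) n) => [/s_step/(leq_trans lt_r) // | ].
exact: leq_ltn_trans.
Qed.

(* The cell (r, c) is taken iff it is among the first s (r + c) cells of its antidiagonal. *)
Definition row_len r := \sum_(c < N) (r < s (r + c)).

Lemma ltn_row_len r c : (c < row_len r) = (r < s (r + c)).
Proof.
apply: (ltn_sum_downclosed (P := fun c => r < s (r + c))) => [{}c | {}c le_Nc].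
  by rewrite addnS; apply: lt_s_downclosed; apply: leq_addr.
by rewrite s_supp ?ltn0 // (leq_trans le_Nc) ?leq_addl.
Qed.

Lemma row_len_nonincr r : row_len r.+1 <= row_len r.
Proof.
apply: leq_sum => c _; apply: leq_bool; rewrite addSnnS addnS => /ltnW.
by apply: lt_s_downclosed; apply: leq_addr.
Qed.

Lemma row_len_eq0 r : N <= r -> row_len r = 0.
Proof.
by move=> le_Nr; apply: big1 => c _; rewrite s_supp ?ltn0 // (leq_trans le_Nr) ?leq_addr.
Qed.

Lemma diag_row_len : diag row_len =1 s.
Proof.
move=> m; rewrite /diag (eq_big_nat _ _ (F2 := fun i => (i < s m) : nat)) => [|i /andP[_]].
  by rewrite big_mkord sum_ltn_ord; apply/minn_idPl.
by rewrite ltnS => le_im; rewrite ltn_row_len subnKC.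
Qed.

Definition nrows := \sum_(r < N) (0 < row_len r).

Lemma ltn_nrows r : (r < nrows) = (0 < row_len r).
Proof.
apply: (ltn_sum_downclosed (P := fun r => 0 < row_len r)) => [{}r | {}r /row_len_eq0 ->] //.
by move=> /leq_trans; apply; apply: row_len_nonincr.
Qed.

Definition rows := mkseq row_len nrows.

Lemma nth_rows : nth 0 rows =1 row_len.
Proof.
move=> r; case: (ltnP r nrows) => [lt_r | ge_r]; first by rewrite nth_mkseq.
by rewrite nth_default ?size_mkseq //; apply/esym/eqP; rewrite eqn0Ngt -ltn_nrows -leqNgt.
Qed.

Lemma rows_partition : is_partition rows.
Proof.
split.
  rewrite sorted_map; apply: sub_sorted (iota_sorted 0 nrows) => i j.
  exact: (nonincr_homo row_len_nonincr).
by apply/allP => x /mapP[r]; rewrite mem_iota => /andP[_ lt_r] ->; rewrite -ltn_nrows.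
Qed.

End RowsOfCastelnuovo.

Lemma slam_surj s : is_castelnuovo s -> exists l, is_partition l /\ slam l =1 s.
Proof.
move=> /castelnuovoP[[N s_supp] s_le s_step]; exists (rows s N); split.
  exact: rows_partition.
by move=> m; rewrite (slam_diag (nth_rows s_supp s_step)) diag_row_len.
Qed.

Theorem proposition2 :
  (forall l : seq nat, is_partition l ->
     is_castelnuovo (slam l) /\
     (forall N, fin_supp (slam l) N ->
        sweight (slam l) N = pweight l /\
        black l = sblack (slam l) N /\
        white l = swhite (slam l) N)) /\
  (forall s : nat -> nat, is_castelnuovo s ->
     exists l : seq nat, is_partition l /\ forall m, slam l m = s m).
Proof.
split=> [l [l_sorted _] | s /slam_surj //].
split=> [|N suppN]; first exact: slam_castelnuovo.
rewrite /sweight /sblack /swhite /black /white (sum_slam predT) // (sum_slam odd) //.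
rewrite (sum_slam (fun n => ~~ odd n)) //.
split=> //; rewrite /pweight sumnE (big_nth 0) big_mkord.
by apply: eq_bigr => r _; rewrite (eq_bigr (fun=> 1)) // sum1_card card_ord.
Qed.
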